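(* Let $m\ge 2$, let $C=uRM(m)$ (defined in the context) with base qubits $b_0,\dots,b_m$ and parity labels $L(q)$. Then $C$ is an $(m-1)$-parity code: for every subset $K\subseteq\{0,\dots,m\}$ with $|K|=m-1$, the number of qubits $q$ with $K\subseteq L(q)$ is even.
   Context: Let $a=\lceil m/2\rceil$, $b=\lfloor m/2\rfloor$. Place $2^m$ bits (qubits) on a grid with $2^b$ rows and $2^a$ columns, positions $(i,j)$, row $1$ on top, column $1$ leftmost. Bulk checks: for $1\le i<2^b$, $1\le j<2^a$, the set $\{(i,j),(i+1,j),(i,j+1),(i+1,j+1)\}$. Boundary checks: for a line of $L=2^n$ positions $1,\dots,L$, each $s\in\{1,\dots,n-1\}$, $w=2^s$, and integer $t$ with $-L/(2w)+1\le t\le L/(2w)-1$, $S(w,t)=\{L/2-w/2+wt,\ L/2-w/2+wt+1,\ L/2+w/2+wt,\ L/2+w/2+wt+1\}$; these with $n=a$ on the top row ($j\mapsto(1,j)$) and with $n=b$ on the leftmost column ($i\mapsto(i,1)$). $C=uRM(m)$ is the set of $x\in\mathbb{F}_2^{2^m}$ with even sum over every check; it has dimension $m+1$. Base qubits are $m+1$ positions $b_0,\dots,b_m$ such that $x\mapsto(x_{b_0},\dots,x_{b_m})$ is a bijection $C\to\mathbb{F}_2^{m+1}$. The parity label of a qubit $q$ is the unique $L(q)\subseteq\{0,\dots,m\}$ with $x_q=\sum_{i\in L(q)}x_{b_i}$ for all $x\in C$. A code with such labels is called $k$-parity if for every $k$-element subset $K$ of the label indices, the number of qubits whose label contains $K$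 is even. *)

From mathcomp Require Import all_boot all_order all_algebra.
Set Implicit Arguments. Unset Strict Implicit. Unset Printing Implicit Defensive.
Import Order.TTheory GRing.Theory Num.Theory.
Local Open Scope ring_scope.

Definition acol (m : nat) : nat := uphalf m.
Definition brow (m : nat) : nat := m./2.

(* Qubits: grid positions.  The 1-indexed position (i,j) (row i, column j)
   is represented by the pair of ordinals (i-1, j-1). *)
Definition Q (m : nat) : finType :=
  ('I_(2 ^ brow m) * 'I_(2 ^ acol m))%type.

Definition row1 m (q : Q m) : nat := (val q.1).+1.
Definition col1 m (q : Q m) : nat := (val q.2).+1.

Definition bulk_check m (i j : nat) (q : Q m) : bool :=
  [&& (i <= row1 q)%N, (row1 q <= i.+1)%N, (j <= col1 q)%N & (col1 q <= j.+1)%N].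

Definition line_check (n s : nat) (t : int) (p : int) : bool :=
  let L : int := (2 ^ n)%:Z in
  let w : int := (2 ^ s)%:Z in
  p \in [:: (L %/ 2)%Z - (w %/ 2)%Z + w * t;
            (L %/ 2)%Z - (w %/ 2)%Z + w * t + 1;
            (L %/ 2)%Z + (w %/ 2)%Z + w * t;
            (L %/ 2)%Z + (w %/ 2)%Z + w * t + 1].

Definition line_index (n s : nat) (t : int) : Prop :=
  let L : int := (2 ^ n)%:Z in
  let w : int := (2 ^ s)%:Z in
  [/\ (1 <= s)%N, (s <= n - 1)%N,
      - (L %/ (2 * w))%Z + 1 <= t & t <= (L %/ (2 * w))%Z - 1].

Definition top_check m (s : nat) (t : int) (q : Q m) : bool :=
  (row1 q == 1%N) && line_check (acol m) s t (col1 q)%:Z.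

Definition left_check m (s : nat) (t : int) (q : Q m) : bool :=
  (col1 q == 1%N) && line_check (brow m) s t (row1 q)%:Z.

Definition in_uRM m (x : {ffun Q m -> 'F_2}) : Prop :=
  [/\ (forall i j : nat, (1 <= i)%N -> (i < 2 ^ brow m)%N ->
         (1 <= j)%N -> (j < 2 ^ acol m)%N ->
         \sum_(q | bulk_check i j q) x q = 0),
      (forall s t, line_index (acol m) s t ->
         \sum_(q | top_check s t q) x q = 0) &
      (forall s t, line_index (brow m) s t ->
         \sum_(q | left_check s t q) x q = 0)].

Definition is_base m (bq : 'I_m.+1 -> Q m) : Prop :=
  forall v : 'I_m.+1 -> 'F_2,
    exists! x : {ffun Q m -> 'F_2}, in_uRM x /\ forall i, x (bq i) = v i.

Definition is_parity_label m (bq : 'I_m.+1 -> Q m) (L : Q m -> {set 'I_m.+1}) : Prop :=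
  forall x : {ffun Q m -> 'F_2}, in_uRM x ->
    forall q, x q = \sum_(i in L q) x (bq i).

From Pilot Require Import Defs.
From mathcomp Require Import all_boot all_order all_algebra zify.

(* Each codeword x of uRM(m) is an affine function of m "Gray coordinates" of
   the position.  The bulk checks give x(i,j) = x(i,0) + x(0,j) + x(0,0)
   (0-indexed), and along the first row (resp. column) the boundary checks
   S(2^(v+1), t) say that the jump x(p-1) + x(p) is the same at p = 2^v(2u+1)
   and at p = 2^v(2u+3); so the jump at p depends only on the 2-adic valuation
   of p.  The number of p in (0, j] of valuation k has the parity of the Gray
   bit gray_k(j) = bit_k(j) + bit_(k+1)(j), so summing the jumps writes x(0,j)
   as an affine combination of these bits.
   The codeword with x(b_i) = [i = k] is q |-> [k \in L(q)], so the number of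
   q with K \subset L(q) is, mod 2, the sum over the grid of a product of
   m - 1 affine functions.  Expanding it, every monomial misses one of the m
   coordinates, and reversing the aligned blocks of length 2^(k+1) is an
   involution without fixed points that flips the k-th Gray bit only, so it
   pairs up the grid points without changing the monomial: every monomial
   sums to 0. *)

Set Implicit Arguments. Unset Strict Implicit. Unset Printing Implicit Defensive.
Import GRing.Theory.

(** * Gray coordinates and block reversals *)

Definition gray (k i : nat) : bool := odd (i %/ 2 ^ k) (+) odd (i %/ 2 ^ k.+1).

Definition block_rev (k i : nat) : nat :=
  i %/ 2 ^ k.+1 * 2 ^ k.+1 + ((2 ^ k.+1).-1 - i %% 2 ^ k.+1).

Lemma ltn_pred_subn n m : 0 < n -> n.-1 - m < n.
Proof. by move=> n_gt0; apply: leq_ltn_trans (leq_subr _ _) _; rewrite ltn_predL. Qed.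

Lemma compl_divn_eq E N r : r < E * N ->
  (E * N).-1 - r = (E.-1 - r %/ N) * N + (N.-1 - r %% N).
Proof.
move=> lt_r; have N_gt0 : 0 < N by case: N lt_r; rewrite ?muln0.
have := divn_eq r N; have := ltn_mod r N; rewrite N_gt0.
have : r %/ N < E by rewrite ltn_divLR.
set a := r %/ N; set b := r %% N; nia.
Qed.

Section BlockReversal.
Variable k : nat.
Let M := 2 ^ k.+1.
Let M_gt0 : 0 < M. Proof. exact: expn_gt0. Qed.

Lemma block_rev_div i : block_rev k i %/ M = i %/ M.
Proof.
by rewrite /block_rev -/M divnMDl // (divn_small (ltn_pred_subn _ M_gt0)) addn0.
Qed.

Lemma block_revK : involutive (block_rev k).
Proof.
move=> i; rewrite {1}/block_rev -/M block_rev_div.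
rewrite /block_rev -/M modnMDl modn_small ?ltn_pred_subn //.
have := ltn_mod i M; rewrite M_gt0 => lt_r.
by rewrite subKn -?divn_eq // -ltnS prednK.
Qed.

Lemma ltn_block_rev n i : k < n -> i < 2 ^ n -> block_rev k i < 2 ^ n.
Proof.
move=> lt_kn lt_in.
have dvd_M : M %| 2 ^ n by rewrite dvdn_exp2l.
have lt_q : i %/ M < 2 ^ n %/ M by rewrite ltn_divLR // divnK.
rewrite /block_rev -/M -(divnK dvd_M).
apply: leq_trans (_ : (i %/ M).+1 * M <= _); last by rewrite leq_mul2r lt_q orbT.
by rewrite mulSn addnC ltn_add2r ltn_pred_subn.
Qed.

Lemma odd_block_rev j i :
  odd (block_rev k i %/ 2 ^ j) = odd (i %/ 2 ^ j) (+) (j <= k).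
Proof.
have [lt_kj | le_jk] := ltnP k j.
  rewrite addbF -(subnKC lt_kj) expnD !divnMA.
  by rewrite [block_rev _ _ %/ _]block_rev_div.
set N := 2 ^ j; set E := 2 ^ (k.+1 - j).
have def_M : M = E * N by rewrite /E /N -expnD subnK // leqW.
have even_E : ~~ odd E by rewrite oddX subn_eq0 orbF -leqNgt.
have N_gt0 : 0 < N := expn_gt0 2 j.
have lt_r : i %% M < E * N by rewrite -def_M ltn_mod.
have lt_a : i %% M %/ N < E by rewrite ltn_divLR.
have -> : block_rev k i =
    (i %/ M * E + (E.-1 - i %% M %/ N)) * N + (N.-1 - i %% M %% N).
  by rewrite /block_rev -/M {2 3}def_M compl_divn_eq // mulnDl !mulnA addnA.
have def_i : i = (i %/ M * E + i %% M %/ N) * N + i %% M %% N.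
  by rewrite mulnDl -mulnA -def_M -addnA -divn_eq -divn_eq.
rewrite [in RHS]def_i !divnMDl // (divn_small (ltn_pred_subn _ N_gt0)).
rewrite (divn_small (ltn_pmod _ N_gt0)) !addn0 !oddD !oddM (negbTE even_E).
by rewrite !andbF /= -subn1 -subnDA add1n oddB // (negbTE even_E) addbT.
Qed.

Lemma gray_block_rev l i : gray l (block_rev k i) = gray l i (+) (l == k).
Proof.
rewrite /gray !odd_block_rev.
by case: (ltngtP l k) => _; case: (odd _); case: (odd _).
Qed.

End BlockReversal.

Lemma gray_succ k c : gray k c.+1 = gray k c (+) (k == logn 2 c.+1).
Proof.
rewrite /gray !divnS ?expn_gt0 // !pfactor_dvdn // !oddD.
by rewrite !oddb; case: (ltngtP k (logn 2 c.+1)); case: (odd _); case: (odd _).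
Qed.

Lemma pow2_logn_odd p : 0 < p -> exists u, p = 2 ^ logn 2 p * u.*2.+1.
Proof.
move=> p_gt0; have [o odd_o def_p] := pfactor_coprime (isT : prime 2) p_gt0.
exists o./2; rewrite {1}def_p mulnC; congr (_ * _).
by rewrite -[LHS]odd_double_half -coprime2n odd_o.
Qed.

Lemma pow2_gt0 n : 0 < 2 ^ n.
Proof. by rewrite expn_gt0. Qed.

(* [ord_pow2 n i] is [0] when [i] is out of range. *)
Definition ord_pow2 (n i : nat) : 'I_(2 ^ n) := insubd (Ordinal (pow2_gt0 n)) i.

Lemma val_ord_pow2 n i : i < 2 ^ n -> val (ord_pow2 n i) = i.
Proof. by move=> lt_i; rewrite /ord_pow2 val_insubd lt_i. Qed.

Lemma ord_pow2K n (i : 'I_(2 ^ n)) : ord_pow2 n (val i) = i.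
Proof. by apply: val_inj; rewrite /= val_ord_pow2. Qed.

Definition block_rev_ord n (k : 'I_n) (i : 'I_(2 ^ n)) : 'I_(2 ^ n) :=
  Ordinal (ltn_block_rev (ltn_ord k) (ltn_ord i)).

Local Open Scope ring_scope.

Section Sums.
Variable V : nmodType.

Lemma sum_option (T : finType) (F : option T -> V) :
  \sum_J F J = F None + \sum_t F (Some t).
Proof.
rewrite (bigD1 None) //=; congr (_ + _).
rewrite (reindex_omap Some id) => [|[]] //.
by apply: eq_bigl => t; rewrite eqxx.
Qed.

Lemma sum_pair_pred (A B : finType) (P : pred A) (Q : pred B) (F : A * B -> V) :
  \sum_(q | P q.1 && Q q.2) F q = \sum_(i | P i) \sum_(j | Q j) F (i, j).
Proof. by rewrite pair_big_dep; apply: eq_big => -[]. Qed.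

Lemma sum_ord_pow2_seq n (s : seq nat) (F : 'I_(2 ^ n) -> V) :
  uniq s -> all (fun p => p < 2 ^ n)%N s ->
  \sum_(i | val i \in s) F i = \sum_(p <- s) F (ord_pow2 n p).
Proof.
move=> s_uniq /allP s_lt.
rewrite -(big_map (ord_pow2 n) xpredT) big_uniq; last first.
  rewrite map_inj_in_uniq // => p q /s_lt lt_p /s_lt lt_q eq_pq.
  by rewrite -(val_ord_pow2 lt_p) eq_pq val_ord_pow2.
apply: eq_bigl => i; apply/idP/mapP => [i_s | [p p_s ->]].
  by exists (val i); rewrite ?ord_pow2K.
by rewrite val_ord_pow2 ?s_lt.
Qed.

Lemma sum_ord_pow2_val0 n (F : 'I_(2 ^ n) -> V) :
  \sum_(i | val i == 0%N) F i = F (ord_pow2 n 0).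
Proof. by apply: big_pred1 => i; rewrite /= -val_eqE val_ord_pow2 ?pow2_gt0. Qed.

Lemma sum_ord_pow2_pair n r (F : 'I_(2 ^ n) -> V) : (r.+1 < 2 ^ n)%N ->
  \sum_(i | val i \in [:: r; r.+1]) F i = F (ord_pow2 n r) + F (ord_pow2 n r.+1).
Proof.
move=> lt_r; rewrite sum_ord_pow2_seq /=; last 2 first.
- by rewrite inE; lia.
- by rewrite lt_r ltnW.
by rewrite !big_cons big_nil addr0.
Qed.

End Sums.

Lemma sumr_indicator (R : pzSemiRingType) (T : finType) (A : {pred T}) :
  \sum_t ((t \in A)%:R : R) = #|A|%:R.
Proof.
rewrite (bigID (mem A)) /= [X in _ + X]big1 ?addr0 => [|t /negbTE -> //].
by rewrite (eq_bigr (fun=> 1)) => [|t ->]; rewrite ?sumr_const.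
Qed.

Lemma sumr_eq_indicator (R : pzSemiRingType) (T : finType) (A : {pred T}) k :
  \sum_(i in A) ((i == k)%:R : R) = (k \in A)%:R.
Proof.
have [k_A | k_nA] := boolP (k \in A).
  by rewrite (bigD1 k) //= eqxx big1 ?addr0 // => i /andP[_ /negbTE ->].
by rewrite big1 // => i i_A; case: eqP i_A => // ->; rewrite (negbTE k_nA).
Qed.

Lemma prodr_indicator (R : comPzSemiRingType) (T : finType) (K A : {pred T}) :
  \prod_(k in K) ((k \in A)%:R : R) = (K \subset A)%:R.
Proof.
have [/subsetP K_A | /subsetPn[k k_K k_nA]] := boolP (K \subset A).
  by rewrite big1 // => k /K_A ->.
by rewrite (bigD1 k) //= (negbTE k_nA) mul0r.
Qed.

Lemma addrr_F2 (a : 'F_2) : a + a = 0.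
Proof. exact: addrr_pchar2 (pchar_Fp (isT : prime 2)) a. Qed.

Lemma addr_eq0_F2 (a b : 'F_2) : (a + b == 0) = (a == b).
Proof. by rewrite addr_eq0 (oppr_pchar2 (pchar_Fp (isT : prime 2))). Qed.

Lemma natr_addb_F2 (a b : bool) : ((a (+) b)%:R : 'F_2) = a%:R + b%:R.
Proof. by case: a; case: b; rewrite ?addr0 ?add0r ?addrr_F2. Qed.

Lemma natr_F2 n : (n%:R : 'F_2) = (odd n)%:R.
Proof. by rewrite -(Fp_nat_mod (isT : prime 2)) modn2. Qed.

Definition jump (g : nat -> 'F_2) (p : nat) : 'F_2 := g p.-1 + g p.

Section GrayExpansion.
Variables (n : nat) (g : nat -> 'F_2).
Hypothesis jump_odd_step : forall v u, (2 ^ v * (u.*2 + 3) < 2 ^ n)%N ->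
  jump g (2 ^ v * u.*2.+1) = jump g (2 ^ v * (u.*2 + 3)).

Lemma jump_odd_multiple v u : (2 ^ v * u.*2.+1 < 2 ^ n)%N ->
  jump g (2 ^ v * u.*2.+1) = jump g (2 ^ v).
Proof.
elim: u => [|u IHu] lt_u; first by rewrite muln1.
rewrite -[u.+1.*2.+1]addn3 -jump_odd_step ?addn3 // IHu //.
by apply: leq_ltn_trans _ lt_u; rewrite leq_mul2l; lia.
Qed.

Lemma jump_pow2_logn p : (0 < p < 2 ^ n)%N -> jump g p = jump g (2 ^ logn 2 p).
Proof.
case/andP=> p_gt0 lt_p; have [u def_p] := pow2_logn_odd p_gt0.
by rewrite [in LHS]def_p jump_odd_multiple -?def_p.
Qed.

Lemma gray_expansion c : (c < 2 ^ n)%N ->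
  g c = g 0%N + \sum_(k < n) jump g (2 ^ k) * (gray k c)%:R.
Proof.
elim: c => [|c IHc] lt_c.
  by rewrite big1 ?addr0 // => k _; rewrite /gray !div0n mulr0.
have lt_log : (logn 2 c.+1 < n)%N.
  rewrite -(ltn_exp2l _ _ (isT : (1 < 2)%N)); apply: leq_ltn_trans lt_c.
  by apply: dvdn_leq; rewrite ?pfactor_dvdnn.
have -> : g c.+1 = g c + jump g c.+1 by rewrite /jump addrA addrr_F2 add0r.
rewrite IHc 1?ltnW // jump_pow2_logn //.
under [in RHS]eq_bigr => k _ do rewrite gray_succ natr_addb_F2 mulrDr.
rewrite big_split -!addrA; congr (_ + (_ + _)).
under eq_bigr => k _ do rewrite mulr_natr mulrb.
by rewrite -big_mkcond (big_ord1_eq _ (fun k => jump g (2 ^ k))) lt_log.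
Qed.

End GrayExpansion.

Lemma grid_plaquette_split (R C : nat) (f : nat -> nat -> 'F_2) :
  (forall r c, (r.+1 < R)%N -> (c.+1 < C)%N ->
     (f r c + f r c.+1) + (f r.+1 c + f r.+1 c.+1) = 0) ->
  forall r c, (r < R)%N -> (c < C)%N -> f r c = f r 0%N + f 0%N c + f 0%N 0%N.
Proof.
move=> plaquette; elim=> [|r IHr] c lt_r lt_c.
  by rewrite addrC addrA addrr_F2 add0r.
elim: c lt_c => [|c IHc] lt_c; first by rewrite -addrA addrr_F2 addr0.
have /eqP := plaquette r c lt_r lt_c; rewrite addrA addr_eq0_F2 => /eqP <-.
rewrite IHc ?(IHr c) ?(IHr c.+1) ?(ltnW lt_r) ?(ltnW lt_c) //.
apply/eqP; move: (f r 0%N) (f 0%N c) (f 0%N 0%N) (f r.+1 0%N) (f 0%N c.+1).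
by do 5!case=> -[|[|?]] ? //.
Qed.

(** * Sums of products of affine functions *)

Section VanishingSums.
Variables (T I : finType) (phi : I -> T -> bool) (flip : I -> T -> T).

Definition coord (J : option I) (t : T) : 'F_2 :=
  if J is Some i then (phi i t)%:R else 1.

Definition affine (f : T -> 'F_2) : Prop :=
  exists c : option I -> 'F_2, forall t, f t = \sum_J c J * coord J t.

Hypothesis flipK : forall i, involutive (flip i).
Hypothesis phi_flip : forall i j t, phi j (flip i t) = phi j t (+) (i == j).

Lemma sum_flip_invariant i (h : T -> 'F_2) :
  (forall t, h (flip i t) = h t) -> \sum_t h t = 0.
Proof.
move=> h_flip; rewrite (bigID (phi i)) /=.
rewrite (reindex_inj (inv_inj (flipK i))) /=.
rewrite (eq_bigl (fun t => ~~ phi i t)) => [|t]; last by rewrite phi_flip eqxx addbT.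
by rewrite (eq_bigr h) ?addrr_F2.
Qed.

Lemma sum_monomial_eq0 (S : finType) (K : {pred S}) (e : S -> option I) i :
  (forall k, k \in K -> e k != Some i) ->
  \sum_t \prod_(k in K) coord (e k) t = 0.
Proof.
move=> e_ne_i; apply: (sum_flip_invariant (i := i)) => t.
apply: eq_bigr => k /e_ne_i; case: (e k) => [j|] //= ne_ij.
rewrite phi_flip (_ : (i == j) = false) ?addbF //.
by apply: contraNF ne_ij => /eqP ->.
Qed.

Lemma sum_prod_affine_eq0 (S : finType) (K : {set S}) (f : S -> T -> 'F_2) :
  (forall k, affine (f k)) -> (#|K| < #|I|)%N ->
  \sum_t \prod_(k in K) f k t = 0.
Proof.
move=> /fin_all_exists[c def_f] small_K.
under eq_bigr => t _ do
  rewrite (eq_bigr _ (fun k _ => def_f k t)) (big_distr_big None) /=.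
rewrite exchange_big big1 // => e _.
under eq_bigr => t _ do rewrite big_split /=.
rewrite -mulr_sumr.
pose used := [set i | Some i \in e @: K].
have card_used : (#|used| <= #|K|)%N.
  rewrite -(card_imset _ Some_inj); apply: leq_trans (leq_imset_card e K).
  by apply: subset_leq_card; apply/subsetP => y /imsetP[i]; rewrite inE => ? ->.
have /set0Pn[i] : ~: used != set0.
  by rewrite -card_gt0 cardsCs setCK subn_gt0 (leq_ltn_trans card_used).
rewrite inE => /negP i_unused.
rewrite (sum_monomial_eq0 (i := i)) ?mulr0 // => k k_K.
by apply/eqP => e_k; apply: i_unused; rewrite inE -e_k imset_f.
Qed.

End VanishingSums.

(** * The checks of uRM(m) *)

(* The shift t for which S(2^(v+1), t) is the set of 1-indexed positions
   {P, P + 1, Q, Q + 1} with P = 2^v (2u+1) and Q = 2^v (2u+3). *)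
Definition line_shift (n v u : nat) : int := (u.+1)%:Z - (2 ^ (n - v.+2))%:Z.

Section LineChecks.
Variables (n v u : nat).
Hypothesis lt_n : (2 ^ v * (u.*2 + 3) < 2 ^ n)%N.

Let P := (2 ^ v * u.*2.+1)%N.
Let Q := (2 ^ v * (u.*2 + 3))%N.
Let C := (2 ^ (n - v.+2))%N.

Let v2_le_n : (v.+2 <= n)%N.
Proof.
rewrite -(ltn_exp2l _ _ (isT : (1 < 2)%N)) expnS; apply: leq_ltn_trans lt_n.
by rewrite mulnC leq_mul2l; apply/orP; right; lia.
Qed.

Let pow2_split : (2 ^ n = C * 2 ^ v * 4)%N.
Proof. by rewrite -mulnA (_ : 4 = 2 ^ 2)%N // -!expnD addn2 subnK. Qed.

Lemma line_index_shift : line_index n v.+1 (line_shift n v u).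
Proof.
have e : (2 ^ n %/ (2 * 2 ^ v.+1) = C)%N.
  have -> : (2 * 2 ^ v.+1 = 2 ^ v * 4)%N by rewrite expnS mulnA mulnC.
  by rewrite pow2_split -mulnA mulnK // muln_gt0 pow2_gt0.
rewrite /line_index -PoszM divz_nat e /line_shift.
have : (u.+2 <= C.*2)%N.
  by move: lt_n; rewrite pow2_split -/C; have := pow2_gt0 v; nia.
by split; lia.
Qed.

Lemma line_check_shift p :
  line_check n v.+1 (line_shift n v u) (p.+1)%:Z = (p \in [:: P.-1; P; Q.-1; Q]).
Proof.
have e1 : (2 ^ n %/ 2 = C * 2 ^ v * 2)%N.
  by rewrite pow2_split (_ : 4 = 2 * 2)%N // mulnA mulnK.
have e2 : (2 ^ v.+1 %/ 2 = 2 ^ v)%N by rewrite expnSr mulnK.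
rewrite /line_check /line_shift !divz_nat e1 e2 expnS /P /Q -/C !inE.
have := pow2_gt0 v; set A := (2 ^ v)%N => A_gt0.
have -> : (C * A * 2)%:Z - A%:Z + (2 * A)%:Z * (u.+1%:Z - C%:Z) = (A * u.*2.+1)%:Z.
  by nia.
have -> : (C * A * 2)%:Z + A%:Z + (2 * A)%:Z * (u.+1%:Z - C%:Z) = (A * (u.*2 + 3))%:Z.
  by nia.
have : (0 < A * u.*2.+1)%N by rewrite muln_gt0 A_gt0.
by move: (A * _)%N (A * _)%N => a b a_gt0; lia.
Qed.

Lemma sum_line_check (F : 'I_(2 ^ n) -> 'F_2) :
  \sum_(j | line_check n v.+1 (line_shift n v u) (val j).+1%:Z) F j =
  jump (F \o ord_pow2 n) P + jump (F \o ord_pow2 n) Q.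
Proof.
rewrite (eq_bigl (fun j => val j \in [:: P.-1; P; Q.-1; Q])) => [|j]; last first.
  exact: line_check_shift.
have A_gt0 := pow2_gt0 v.
rewrite sum_ord_pow2_seq.
- by rewrite !big_cons big_nil addr0 /jump !addrA.
- by rewrite /= !inE /P /Q; move: (2 ^ v)%N A_gt0 => A; nia.
- by rewrite /= lt_n /P /Q; move: lt_n A_gt0; move: (2 ^ v)%N => A; nia.
Qed.

End LineChecks.

Lemma bulk_checkE m r c (q : Q m) : bulk_check r.+1 c.+1 q =
  (val q.1 \in [:: r; r.+1]) && (val q.2 \in [:: c; c.+1]).
Proof. by rewrite /bulk_check /Defs.row1 /Defs.col1 !inE; lia. Qed.

Lemma top_checkE m s t (q : Q m) :
  top_check s t q = (val q.1 == 0%N) && line_check (acol m) s t (val q.2).+1%:Z.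
Proof. by []. Qed.

Lemma left_checkE m s t (q : Q m) :
  left_check s t q = line_check (brow m) s t (val q.1).+1%:Z && (val q.2 == 0%N).
Proof. by rewrite andbC. Qed.

(** * Codewords are affine in the Gray coordinates *)

Definition grid_coord m (i : 'I_(brow m) + 'I_(acol m)) (q : Q m) : bool :=
  match i with inl k => gray k (val q.1) | inr k => gray k (val q.2) end.

Definition grid_flip m (i : 'I_(brow m) + 'I_(acol m)) (q : Q m) : Q m :=
  match i with
  | inl k => (block_rev_ord k q.1, q.2)
  | inr k => (q.1, block_rev_ord k q.2)
  end.

Lemma grid_flipK m (i : 'I_(brow m) + 'I_(acol m)) : involutive (grid_flip i).
Proof. by case: i => k [r c]; congr pair; apply: val_inj; apply: block_revK. Qed.

Lemma grid_coord_flip m (i j : 'I_(brow m) + 'I_(acol m)) q :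
  grid_coord j (grid_flip i q) = grid_coord j q (+) (i == j).
Proof. by case: i j => k [] l; rewrite /= ?addbF // gray_block_rev eq_sym. Qed.

Lemma card_grid_index m : #|{: 'I_(brow m) + 'I_(acol m)}| = m.
Proof.
by rewrite card_sum !card_ord /brow /acol uphalf_half addnCA addnn odd_double_half.
Qed.

Section Codewords.
Variables (m : nat) (x : {ffun Q m -> 'F_2}).
Hypothesis x_code : in_uRM x.

Let X r c : 'F_2 := x (ord_pow2 (brow m) r, ord_pow2 (acol m) c).

Lemma codeword_plaquette r c : (r.+1 < 2 ^ brow m)%N -> (c.+1 < 2 ^ acol m)%N ->
  (X r c + X r c.+1) + (X r.+1 c + X r.+1 c.+1) = 0.
Proof.
move=> lt_r lt_c; case: x_code => bulk _ _.
rewrite -(bulk r.+1 c.+1) // (eq_bigl _ _ (@bulk_checkE m r c)).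
rewrite (sum_pair_pred (fun i : 'I_(2 ^ brow m) => val i \in [:: r; r.+1])
                       (fun j : 'I_(2 ^ acol m) => val j \in [:: c; c.+1])).
by rewrite sum_ord_pow2_pair // !sum_ord_pow2_pair.
Qed.

Lemma codeword_top_jump v u : (2 ^ v * (u.*2 + 3) < 2 ^ acol m)%N ->
  jump (X 0%N) (2 ^ v * u.*2.+1) = jump (X 0%N) (2 ^ v * (u.*2 + 3)).
Proof.
move=> lt_n; apply/eqP; rewrite -addr_eq0_F2; apply/eqP.
case: x_code => _ top _; rewrite -(top _ _ (line_index_shift lt_n)).
rewrite (eq_bigl _ _ (@top_checkE m _ _)).
rewrite (sum_pair_pred (fun i : 'I_(2 ^ brow m) => val i == 0%N)
  (fun j : 'I_(2 ^ acol m) =>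
     line_check (acol m) v.+1 (line_shift (acol m) v u) (val j).+1%:Z)).
by rewrite sum_ord_pow2_val0 sum_line_check.
Qed.

Lemma codeword_left_jump v u : (2 ^ v * (u.*2 + 3) < 2 ^ brow m)%N ->
  jump (X^~ 0%N) (2 ^ v * u.*2.+1) = jump (X^~ 0%N) (2 ^ v * (u.*2 + 3)).
Proof.
move=> lt_n; apply/eqP; rewrite -addr_eq0_F2; apply/eqP.
case: x_code => _ _ left; rewrite -(left _ _ (line_index_shift lt_n)).
rewrite (eq_bigl _ _ (@left_checkE m _ _)).
rewrite (sum_pair_pred
  (fun i : 'I_(2 ^ brow m) =>
     line_check (brow m) v.+1 (line_shift (brow m) v u) (val i).+1%:Z)
  (fun j : 'I_(2 ^ acol m) => val j == 0%N)).
by under eq_bigr => i _ do rewrite sum_ord_pow2_val0; rewrite sum_line_check.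
Qed.

Lemma codeword_affine : affine (@grid_coord m) x.
Proof.
have top := gray_expansion codeword_top_jump.
have left := gray_expansion codeword_left_jump.
exists (fun J : option ('I_(brow m) + 'I_(acol m)) => match J with
  | None => X 0%N 0%N
  | Some (inl k) => jump (X^~ 0%N) (2 ^ k)
  | Some (inr k) => jump (X 0%N) (2 ^ k)
  end).
move=> [i j]; have -> : x (i, j) = X i j by rewrite /X !ord_pow2K.
rewrite (grid_plaquette_split codeword_plaquette) // (left i) // (top j) //.
by rewrite sum_option big_sumType /= mulr1 addrACA addrr_F2 add0r [LHS]addrC.
Qed.

End Codewords.

Theorem lemma5 (m : nat) (hm : (2 <= m)%N)
  (bq : 'I_m.+1 -> Q m) (hb : is_base bq)
  (L : Q m -> {set 'I_m.+1}) (hL : is_parity_label bq L) :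
  forall K : {set 'I_m.+1}, #|K| = (m - 1)%N ->
    ~~ odd #|[set q : Q m | K \subset L q]|.
Proof.
move=> K card_K.
have /fin_all_exists[x x_dual] : forall k, exists y : {ffun Q m -> 'F_2},
    in_uRM y /\ forall i, y (bq i) = (i == k)%:R.
  by move=> k; have [y [y_dual _]] := hb (fun i => (i == k)%:R); exists y.
have x_label k q : x k q = (k \in L q)%:R.
  have [x_code x_bq] := x_dual k.
  by rewrite (hL _ x_code) (eq_bigr _ (fun i _ => x_bq i)) sumr_eq_indicator.
have : \sum_q \prod_(k in K) x k q = 0.
  apply: (sum_prod_affine_eq0 (@grid_flipK m) (@grid_coord_flip m)).
    by move=> k; apply: codeword_affine; case: (x_dual k).
  by rewrite card_K card_grid_index; lia.
under eq_bigr => q _ do rewrite (eq_bigr _ (fun k _ => x_label k q)) prodr_indicator.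
rewrite (eq_bigr (fun q => (q \in [set q | K \subset L q])%:R)) => [|q _].
  by rewrite sumr_indicator natr_F2; case: (odd _).
by rewrite inE.
Qed.
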